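(* Assume that the ALS parameter sequence $(\mathbf p_k)_{k\in\mathbb N}$ is bounded. If some accumulation point $\bar v$ of the sequence $(v_k)_{k\in\mathbb N}$ is isolated in the (nonempty) set of accumulation points of $(v_k)_{k\in\mathbb N}$, then $v_k\to\bar v$ as $k\to\infty$.
   Context: Let $d\ge 1$ and $m_1,\dots,m_d$ be positive integers, $N=\prod_{\nu=1}^d m_\nu$, and $\mathcal V=\bigotimes_{\nu=1}^d\mathbb R^{m_\nu}\cong\mathbb R^N$ with the Euclidean inner product. Let $A\in\mathbb R^{N\times N}$ be symmetric positive definite and $b\in\mathcal V\setminus\{0\}$; put $f(v)=\frac{1}{\|b\|^2}\big(\tfrac12\langle Av,v\rangle-\langle b,v\rangle\big)$. A tensor format representation consists of an integer $L\ge d$, finite-dimensional real inner product spaces $P_1,\dots,P_L$, the parameter space $P=P_1\times\dots\times P_L$ (with product norm), and a multilinear map $U:P\to\mathcal V$; put $F=f\circ U$. For $\mathbf p=(p_1,\dots,p_L)\in P$ and $\mu\in\{1,\dots,L\}$ let $W_{\mu,\mathbf p^{[\mu]}}:P_\mu\to\mathcal V$ be the linear map $q\mapsto U(p_1,\dots,p_{\mu-1},q,p_{\mu+1},\dots,p_L)$ (depending only on $\mathbf p^{[\mu]}=(p_1,\dots,p_{\mu-1},p_{\mu+1},\dots,p_L)$). Linear maps are identified with matrices w.r.t. orthonormal bases; $X^T$ is the transpose, $X^+$ the Moore–Penrose pseudoinverse. ALS: choose $\mathbf p_1=(p_1^1,\dots,p_L^1)\in P$. For $k=1,2,\dots$ and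 $\mu=1,\dots,L$ in this order let $W_{k,\mu}:=W_{\mu,(p_1^{k+1},\dots,p_{\mu-1}^{k+1},p_{\mu+1}^k,\dots,p_L^k)}$ and $p_\mu^{k+1}:=(W_{k,\mu}^TAW_{k,\mu})^+W_{k,\mu}^Tb$ (the minimum-norm minimiser of $q\mapsto F(p_1^{k+1},\dots,p_{\mu-1}^{k+1},q,p_{\mu+1}^k,\dots,p_L^k)$). Put $\mathbf p_k=(p_1^k,\dots,p_L^k)$ and $v_k=U(\mathbf p_k)$. *)

From HB Require Import structures.
From mathcomp Require Import all_boot all_order all_algebra.
From mathcomp Require Import reals.
From Stdlib Require Import ClassicalEpsilon.
Set Implicit Arguments. Unset Strict Implicit. Unset Printing Implicit Defensive.
Import Order.TTheory GRing.Theory Num.Theory.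
Local Open Scope ring_scope.

Section ALS.
Variable R : realType.

Definition enorm (N : nat) (x : 'cV[R]_N) : R := Num.sqrt (\sum_(i < N) x i 0 ^+ 2).

(* Moore--Penrose pseudoinverse: the (unique) matrix satisfying the four
   Penrose equations (it always exists; chosen by classical choice). *)
Definition is_pinv (m n : nat) (M : 'M[R]_(m, n)) (X : 'M[R]_(n, m)) : Prop :=
  [/\ M *m X *m M = M, X *m M *m X = X, (M *m X)^T = M *m X & (X *m M)^T = X *m M].

Definition pinv (m n : nat) (M : 'M[R]_(m, n)) : 'M[R]_(n, m) :=
  epsilon (inhabits 0) (is_pinv M).

Definition symmetric_pd (N : nat) (A : 'M[R]_N) : Prop :=
  A^T = A /\ forall x : 'cV[R]_N, x != 0 -> 0 < ((x^T *m A *m x) 0 0).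

(* parameter space P = P_1 x ... x P_L, with P_mu identified with R^(n mu)
   via an orthonormal basis *)
Definition params (L : nat) (n : 'I_L -> nat) := forall mu : 'I_L, 'cV[R]_(n mu).

Definition multilinear (L N : nat) (n : 'I_L -> nat) (U : params n -> 'cV[R]_N) : Prop :=
  forall (p : params n) (mu : 'I_L) (a : R) (q1 q2 : 'cV[R]_(n mu)),
    U (dfwith p (a *: q1 + q2)) = a *: U (dfwith p q1) + U (dfwith p q2).

(* matrix of the linear map W_{mu, p^[mu]} : q |-> U(p_1,..,q,..,p_L)
   w.r.t. the standard (orthonormal) bases *)
Definition Wmat (L N : nat) (n : 'I_L -> nat) (U : params n -> 'cV[R]_N)
  (p : params n) (mu : 'I_L) : 'M[R]_(N, n mu) :=
  \matrix_(i < N, j < n mu) U (dfwith p (delta_mx j 0 : 'cV[R]_(n mu))) i 0.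

Definition als_update (L N : nat) (n : 'I_L -> nat) (U : params n -> 'cV[R]_N)
  (A : 'M[R]_N) (b : 'cV[R]_N) (p : params n) (mu : 'I_L) : params n :=
  let W := Wmat U p mu in
  dfwith p (pinv (W^T *m A *m W) *m W^T *m b).

Definition als_sweep (L N : nat) (n : 'I_L -> nat) (U : params n -> 'cV[R]_N)
  (A : 'M[R]_N) (b : 'cV[R]_N) (p : params n) : params n :=
  foldl (als_update U A b) p (enum 'I_L).

(* als_seq ... p1 k = p_{k+1} (index shifted by one w.r.t. the paper) *)
Definition als_seq (L N : nat) (n : 'I_L -> nat) (U : params n -> 'cV[R]_N)
  (A : 'M[R]_N) (b : 'cV[R]_N) (p1 : params n) (k : nat) : params n :=
  iter k (als_sweep U A b) p1.

Definition accumulation_point (N : nat) (v : nat -> 'cV[R]_N) (w : 'cV[R]_N) : Prop :=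
  forall eps : R, 0 < eps -> forall K : nat, exists2 k : nat, (K <= k)%N & enorm (v k - w) < eps.

Definition converges_to (N : nat) (v : nat -> 'cV[R]_N) (w : 'cV[R]_N) : Prop :=
  forall eps : R, 0 < eps -> exists K : nat, forall k : nat, (K <= k)%N -> enorm (v k - w) < eps.

End ALS.

(** ALS is block coordinate descent for the energy [E v = |v - A^-1 b|_A^2]: a
    micro-step replaces [v] by the [A]-orthogonal projection of [A^-1 b] onto
    the range of [W_{k,mu}], so by Pythagoras [E] drops by exactly the squared
    [A]-norm of the step.  Hence [E (v_k)] converges and, [A] being positive
    definite, [v_{k+1} - v_k -> 0].  A sequence with vanishing increments
    cannot leave an isolated accumulation point [x] infinitely often: it would
    then cross every thin annulus around [x] infinitely often, and by
    compactness produce a second accumulation point in an annulus of radius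
    below the isolation radius. *)

From HB Require Import structures.
From mathcomp Require Import all_boot all_order all_algebra.
From mathcomp Require Import reals ring lra.
From mathcomp Require Import boolp classical_sets topology normedtype sequences.
From Stdlib Require ClassicalEpsilon.
Import Order.TTheory GRing.Theory Num.Theory.
Import numFieldNormedType.Exports.
Set Implicit Arguments. Unset Strict Implicit. Unset Printing Implicit Defensive.
Local Open Scope classical_set_scope.
Local Open Scope ring_scope.

Section QuadraticForm.
Variables (R : realType) (N : nat).
Implicit Types (A : 'M[R]_N) (u w : 'cV[R]_N).

Definition qform A u w : R := (u^T *m A *m w) 0 0.

Lemma qformDl A u1 u2 w : qform A (u1 + u2) w = qform A u1 w + qform A u2 w.
Proof. by rewrite /qform linearD /= !mulmxDl mxE. Qed.

Lemma qformDr A u w1 w2 : qform A u (w1 + w2) = qform A u w1 + qform A u w2.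
Proof. by rewrite /qform mulmxDr mxE. Qed.

Lemma qformZl A a u w : qform A (a *: u) w = a * qform A u w.
Proof. by rewrite /qform linearZ /= -!scalemxAl mxE. Qed.

Lemma qformZr A a u w : qform A u (a *: w) = a * qform A u w.
Proof. by rewrite /qform -scalemxAr mxE. Qed.

Lemma qformBl A u1 u2 w : qform A (u1 - u2) w = qform A u1 w - qform A u2 w.
Proof. by rewrite qformDl -scaleN1r qformZl mulN1r. Qed.

Lemma qformBr A u w1 w2 : qform A u (w1 - w2) = qform A u w1 - qform A u w2.
Proof. by rewrite qformDr -scaleN1r qformZr mulN1r. Qed.

Lemma qform0r A u : qform A u 0 = 0.
Proof. by rewrite /qform mulmx0 mxE. Qed.

Lemma qformC A u w : A^T = A -> qform A u w = qform A w u.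
Proof.
move=> sA; rewrite /qform.
have -> : (u^T *m A *m w) 0 0 = ((u^T *m A *m w)^T) 0 0 by rewrite [RHS]mxE.
by rewrite !trmx_mul trmxK sA mulmxA.
Qed.

Lemma qform1 u : qform 1%:M u u = \sum_(i < N) u i 0 ^+ 2.
Proof. by rewrite /qform mulmx1 mxE; apply: eq_bigr => i _; rewrite mxE expr2. Qed.

Lemma symmetric_pd1 : symmetric_pd (1%:M : 'M[R]_N).
Proof.
split; first exact: trmx1.
move=> u u0; rewrite -/(qform _ u u) qform1 lt_def sumr_ge0 ?andbT; last first.
  by move=> i _; exact: sqr_ge0.
apply: contra u0 => /eqP /psumr_eq0P u_eq0; apply/eqP/colP => i.
by apply/eqP; rewrite mxE -sqrf_eq0 u_eq0 // => j _; exact: sqr_ge0.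
Qed.

Lemma qform_galerkin k A (W : 'M[R]_(N, k)) (a c : 'cV[R]_k) (z : 'cV[R]_N) :
  A^T = A -> W^T *m A *m (W *m c - z) = 0 ->
  qform A (W *m a - z) (W *m a - z) =
  qform A (W *m c - z) (W *m c - z) + qform A (W *m a - W *m c) (W *m a - W *m c).
Proof.
move=> sA orth; set e := W *m a - W *m c; set r := W *m c - z.
have er0 : qform A e r = 0.
  by rewrite /qform /e -mulmxBr trmx_mul -!mulmxA (mulmxA W^T) orth mulmx0 mxE.
have -> : W *m a - z = e + r by rewrite /e /r addrA subrK.
rewrite qformDl (qformDr A e e r) (qformDr A r e r) er0 (qformC r e sA) er0.
by rewrite addr0 add0r addrC.
Qed.

Section PositiveDefinite.
Variable A : 'M[R]_N.
Hypothesis pdA : symmetric_pd A.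

Lemma qform_ge0 u : 0 <= qform A u u.
Proof.
have [->|u0] := eqVneq u 0; first by rewrite qform0r.
by apply: ltW; case: pdA => _; exact.
Qed.

Lemma qform_eq0 u : qform A u u = 0 -> u = 0.
Proof.
move=> q0; apply: contra_eq q0 => u0.
by case: pdA => _ /(_ u u0); rewrite lt_def => /andP[].
Qed.

Lemma qform_CauchySchwarz u w : qform A u w ^+ 2 <= qform A u u * qform A w w.
Proof.
have [->|w0] := eqVneq w 0; first by rewrite qform0r expr0n /= qform0r mulr0.
have c0 : 0 < qform A w w by case: pdA => _; exact.
set s := qform A u w; set a := qform A u u; set c := qform A w w.
have := qform_ge0 (u - (s / c) *: w).
rewrite qformBl !qformBr !qformZl !qformZr -/a -/c -/s (qformC w u pdA.1) -/s.
have -> : a - s / c * s - (s / c * s - s / c * (s / c * c)) = a - s ^+ 2 / c.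
  by field; rewrite gt_eqF.
by rewrite subr_ge0 ler_pdivrMr.
Qed.

Lemma spd_unitmx : A \in unitmx.
Proof.
rewrite -row_free_unit -kermx_eq0; apply/eqP/row_matrixP => i; rewrite row0.
set u := row i (kermx A).
have uA : u *m A = 0 by rewrite /u -row_mul mulmx_ker row0.
have /qform_eq0 : qform A u^T u^T = 0 by rewrite /qform trmxK uA mul0mx mxE.
by move/(congr1 trmx); rewrite trmxK trmx0.
Qed.

End PositiveDefinite.
End QuadraticForm.

Section EuclideanNorm.
Variables (R : realType) (N : nat).
Implicit Types (x y : 'cV[R]_N).

Lemma enorm_ge0 x : 0 <= enorm x.
Proof. exact: sqrtr_ge0. Qed.

Lemma enorm0 : enorm (0 : 'cV[R]_N) = 0.
Proof. by rewrite /enorm big1 ?sqrtr0 // => i _; rewrite mxE expr0n. Qed.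

Lemma enorm_sqr x : enorm x ^+ 2 = qform 1%:M x x.
Proof. by rewrite qform1 sqr_sqrtr // sumr_ge0 // => i _; exact: sqr_ge0. Qed.

Lemma enormN x : enorm (- x) = enorm x.
Proof. by congr Num.sqrt; apply: eq_bigr => i _; rewrite mxE sqrrN. Qed.

Lemma enormB x y : enorm (x - y) = enorm (y - x).
Proof. by rewrite -enormN opprB. Qed.

Lemma enormD x y : enorm (x + y) <= enorm x + enorm y.
Proof.
have pd1 := symmetric_pd1 R N.
have xy_le : qform 1%:M x y <= enorm x * enorm y.
  have := qform_CauchySchwarz pd1 x y; rewrite -!enorm_sqr -exprMn.
  have := mulr_ge0 (enorm_ge0 x) (enorm_ge0 y).
  set p := enorm x * enorm y; set q := qform _ x y; nra.
have : enorm (x + y) ^+ 2 <= (enorm x + enorm y) ^+ 2.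
  rewrite !enorm_sqr qformDl !qformDr (qformC y x pd1.1) -!enorm_sqr; nra.
have := enorm_ge0 (x + y); have := enorm_ge0 x; have := enorm_ge0 y; nra.
Qed.

Lemma enormB_le x y z : enorm (x - z) <= enorm (x - y) + enorm (y - z).
Proof.
have -> : x - z = (x - y) + (y - z) by rewrite addrA subrK.
exact: enormD.
Qed.

Lemma entry_le_enorm x i : `|x i 0| <= enorm x.
Proof.
rewrite /enorm -sqrtr_sqr ler_sqrt ?sumr_ge0 // => [|j _]; last exact: sqr_ge0.
by rewrite (bigD1 i) //= lerDl sumr_ge0 // => j _; exact: sqr_ge0.
Qed.

Lemma enorm_le_entries x (t : R) : (forall i, `|x i 0| <= t) -> enorm x <= N%:R * t.
Proof.
case: N x => [|n] x xt; first by rewrite /enorm big_ord0 sqrtr0 mul0r.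
have t0 : 0 <= t := le_trans (normr_ge0 _) (xt ord0).
rewrite /enorm -(ger0_norm (mulr_ge0 (ler0n _ n.+1) t0)) -sqrtr_sqr.
rewrite ler_sqrt ?sqr_ge0 //.
apply: (@le_trans _ _ (n.+1%:R * t ^+ 2)).
  rewrite mulr_natl -[n.+1 in leRHS]card_ord -sumr_const.
  apply: ler_sum => i _; rewrite -real_normK ?num_real // lerXn2r ?nnegrE //.
rewrite exprMn ler_wpM2r ?sqr_ge0 // expr2 ler_peMl ?ler1n //.
Qed.

Lemma qform_le_entries (B : 'M[R]_N) x :
  qform B x x <= (\sum_j \sum_i `|B i j|) * enorm x ^+ 2.
Proof.
rewrite /qform mxE mulr_suml; apply: ler_sum => j _.
rewrite mxE mulr_suml mulr_suml; apply: ler_sum => i _; rewrite !mxE.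
apply: le_trans (ler_norm _) _; rewrite !normrM mulrAC [leRHS]mulrC expr2.
by apply: ler_wpM2r => //; rewrite ler_pM ?entry_le_enorm.
Qed.

Lemma spd_enorm_bound (A : 'M[R]_N) : symmetric_pd A ->
  exists2 c : R, 0 < c & forall x, enorm x ^+ 2 <= c * qform A x x.
Proof.
move=> pdA; set B := invmx A; have uA := spd_unitmx pdA.
set c := (\sum_j \sum_i `|B i j|) + 1.
have c_gt0 : 0 < c by rewrite ltr_wpDl // sumr_ge0 // => j _; rewrite sumr_ge0.
exists c => // x.
have Bx_dot : qform A x (B *m x) = enorm x ^+ 2.
  by rewrite enorm_sqr /qform /B mulmxA -(mulmxA _ A) mulmxV // mulmx1.
have Bx_norm : qform A (B *m x) (B *m x) <= c * enorm x ^+ 2.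
  rewrite /qform trmx_mul /B trmx_inv pdA.1 -!mulmxA (mulmxA A) mulmxV // mul1mx.
  rewrite mulmxA -/(qform _ x x); apply: le_trans (qform_le_entries _ _) _.
  by rewrite ler_wpM2r ?exprn_ge0 ?enorm_ge0 // lerDl.
have := qform_CauchySchwarz pdA x (B *m x); rewrite Bx_dot.
move: Bx_norm (qform_ge0 pdA x) (exprn_ge0 2 (enorm_ge0 x)).
set s := enorm x ^+ 2; set q := qform A x x => Bx_norm q_ge0 s_ge0 cs.
have [s0|s_gt0] := eqVneq s 0; first by rewrite s0 mulr_ge0 // ltW.
have : s * s <= s * (c * q) by nra.
by rewrite ler_pM2l // lt_def s_gt0.
Qed.

End EuclideanNorm.

Section PseudoInverse.
Variable R : realType.

Lemma spd_gram_eq0 N k (A : 'M[R]_N) (Z : 'M[R]_(N, k)) :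
  symmetric_pd A -> Z^T *m A *m Z = 0 -> Z = 0.
Proof.
move=> pdA ZAZ; apply/matrixP => i j.
have Zj0 : col j Z = 0.
  apply: (qform_eq0 pdA); rewrite /qform colE trmx_mul -!mulmxA.
  by rewrite (mulmxA A) !(mulmxA Z^T) ZAZ mul0mx mulmx0 mxE.
by have := congr1 (fun c : 'cV_N => c i 0) Zj0; rewrite !mxE.
Qed.

Lemma gram_unitmx r n (C : 'M[R]_(r, n)) : row_free C -> C *m C^T \in unitmx.
Proof.
move=> fC; rewrite -row_free_unit -kermx_eq0; apply/eqP/row_matrixP => i.
rewrite row0; set u := row i _.
have uCC : u *m C *m C^T = 0 by rewrite -mulmxA /u -row_mul mulmx_ker row0.
have uC0 : (u *m C)^T = 0.
  apply: (spd_gram_eq0 (symmetric_pd1 R n)).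
  by rewrite trmxK mulmx1 trmx_mul mulmxA uCC mul0mx.
by apply/eqP; rewrite -(mulmx_free_eq0 _ fC) -trmx_eq0 uC0.
Qed.

(* [(B C)^+ = C^+ B^+] with [B^+ = (B^T B)^-1 B^T] and [C^+ = C^T (C C^T)^-1]. *)
Lemma is_pinv_factor m r n (B : 'M[R]_(m, r)) (C : 'M[R]_(r, n)) :
  B^T *m B \in unitmx -> C *m C^T \in unitmx ->
  is_pinv (B *m C) (C^T *m invmx (C *m C^T) *m invmx (B^T *m B) *m B^T).
Proof.
move=> uB uC; set GB := invmx (B^T *m B); set GC := invmx (C *m C^T).
have sGB : GB^T = GB by rewrite /GB trmx_inv trmx_mul trmxK.
have sGC : GC^T = GC by rewrite /GC trmx_inv trmx_mul trmxK.
have GBK p (X : 'M_(r, p)) : GB *m (B^T *m (B *m X)) = X.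
  by rewrite (mulmxA B^T) (mulmxA GB) mulVmx // mul1mx.
have GCK p (X : 'M_(r, p)) : C *m (C^T *m (GC *m X)) = X.
  by rewrite (mulmxA C^T) !(mulmxA C) mulmxV // mul1mx.
split.
- by rewrite -!mulmxA GCK GBK.
- by rewrite -!mulmxA GBK GCK.
- by rewrite -!mulmxA GCK !trmx_mul !trmxK sGB !mulmxA.
- by rewrite -!mulmxA GBK !trmx_mul !trmxK sGC !mulmxA.
Qed.

Lemma pinvP m n (M : 'M[R]_(m, n)) : is_pinv M (pinv M).
Proof.
apply: (ClassicalEpsilon.epsilon_spec (inhabits 0) (is_pinv M)).
have uB : (col_base M)^T *m col_base M \in unitmx.
  have /gram_unitmx : row_free (col_base M)^T.
    by rewrite /row_free mxrank_tr; exact: col_base_full.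
  by rewrite trmxK.
have uC := gram_unitmx (row_base_free M).
by have := is_pinv_factor uB uC; rewrite mulmx_base => ?; eexists; eassumption.
Qed.

Lemma gram_pinv_normal_eq N k (A : 'M[R]_N) (W : 'M[R]_(N, k)) (b : 'cV[R]_N) :
  symmetric_pd A ->
  W^T *m A *m W *m (pinv (W^T *m A *m W) *m W^T *m b) = W^T *m b.
Proof.
move=> pdA; set M := W^T *m A *m W; set X := pinv M.
have [MXM _ _ _] := pinvP M.
set Q := 1%:M - M *m X.
have QM0 : Q *m M = 0 by rewrite /Q mulmxBl mul1mx -/X MXM subrr.
have QW0 : W *m Q^T = 0.
  apply: (spd_gram_eq0 pdA).
  have -> : (W *m Q^T)^T *m A *m (W *m Q^T) = Q *m M *m Q^T.
    by rewrite /M trmx_mul trmxK !mulmxA.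
  by rewrite QM0 mul0mx.
have QWt0 : Q *m W^T = 0 by rewrite -[Q]trmxK -trmx_mul QW0 trmx0.
have MXW : M *m X *m W^T = W^T.
  by apply/eqP; rewrite -subr_eq0 -{2}[W^T]mul1mx -mulmxBl -opprB mulNmx QWt0 oppr0.
by rewrite !mulmxA MXW.
Qed.

End PseudoInverse.

Lemma dfwith_id (I : eqType) (T : I -> Type) (f : forall i, T i) (i : I) :
  dfwith f (f i) = f.
Proof.
by apply: functional_extensionality_dep => j; case: dfwithP => // <-.
Qed.

Section MultilinearSlice.
Variables (R : realType) (L N : nat) (n : 'I_L -> nat).
Variable U : params R n -> 'cV[R]_N.
Hypothesis mlU : multilinear U.

Lemma multilinear_dfwithE (p : params R n) (mu : 'I_L) (q : 'cV[R]_(n mu)) :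
  U (dfwith p q) = Wmat U p mu *m q.
Proof.
have U0 : U (dfwith p (0 : 'cV_(n mu))) = 0.
  have := @mlU p mu 1 0 0; rewrite !scale1r addr0; set X := U _ => XX.
  by apply: (addrI X); rewrite addr0 -XX.
have UD (q1 q2 : 'cV_(n mu)) : U (dfwith p (q1 + q2)) = U (dfwith p q1) + U (dfwith p q2).
  by have := @mlU p mu 1 q1 q2; rewrite !scale1r.
have UZ a (q1 : 'cV_(n mu)) : U (dfwith p (a *: q1)) = a *: U (dfwith p q1).
  by have := @mlU p mu a q1 0; rewrite !addr0 U0 addr0.
have {1}-> : q = \sum_j q j 0 *: delta_mx j 0.
  by rewrite {1}[q]matrix_sum_delta; apply: eq_bigr => j _; rewrite big_ord1.
rewrite (big_morph (fun x => U (dfwith p x)) UD U0).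
apply/colP => i; rewrite summxE !mxE; apply: eq_bigr => j _.
by rewrite UZ !mxE mulrC.
Qed.

Lemma multilinear_WmatE (p : params R n) (mu : 'I_L) : U p = Wmat U p mu *m p mu.
Proof. by rewrite -multilinear_dfwithE dfwith_id. Qed.

End MultilinearSlice.

Section ALSEnergy.
Variables (R : realType) (L N : nat) (n : 'I_L -> nat).
Variable U : params R n -> 'cV[R]_N.
Hypothesis mlU : multilinear U.
Variables (A : 'M[R]_N) (b : 'cV[R]_N).
Hypothesis pdA : symmetric_pd A.

(* [f (v) = (energy v - energy 0) / (2 |b|^2)] for the objective [f] of the paper. *)
Definition energy (v : 'cV[R]_N) : R :=
  qform A (v - invmx A *m b) (v - invmx A *m b).

Lemma energy_ge0 v : 0 <= energy v.
Proof. exact: qform_ge0. Qed.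

Lemma als_update_energy p mu (p' := als_update U A b p mu) :
  energy (U p) = energy (U p') + qform A (U p - U p') (U p - U p').
Proof.
rewrite /energy (multilinear_WmatE mlU p mu) /p' /als_update.
rewrite (multilinear_dfwithE mlU); apply: qform_galerkin; first exact: pdA.1.
set W := Wmat U p mu.
rewrite mulmxBr (mulmxA (W^T *m A) W) gram_pinv_normal_eq // -mulmxA mulKVmx ?subrr //.
exact: spd_unitmx.
Qed.

Variable c : R.
Hypothesis c_ge0 : 0 <= c.
Hypothesis enorm_le_qform : forall x, enorm x ^+ 2 <= c * qform A x x.

Lemma enorm_le_sqrt_qform x : enorm x <= Num.sqrt (c * qform A x x).
Proof.
by rewrite -(ger0_norm (enorm_ge0 x)) -sqrtr_sqr ler_sqrt ?mulr_ge0 ?qform_ge0.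
Qed.

Lemma als_update_decrease p mu (p' := als_update U A b p mu) :
  energy (U p') <= energy (U p) /\
  enorm (U p' - U p) <= Num.sqrt (c * (energy (U p) - energy (U p'))).
Proof.
rewrite (als_update_energy p mu) -/p' addrAC subrr add0r enormB.
by rewrite lerDl qform_ge0 // enorm_le_sqrt_qform.
Qed.

Lemma als_foldl_decrease (s : seq 'I_L) p
    (p' := foldl (als_update U A b) p s) :
  energy (U p') <= energy (U p) /\
  enorm (U p' - U p) <= (size s)%:R * Num.sqrt (c * (energy (U p) - energy (U p'))).
Proof.
elim: s p @p' => [|mu s IHs] p /=; first by rewrite !subrr enorm0 mul0r.
set p1 := als_update U A b p mu; set p' := foldl _ p1 s.
have [e1 d1] := als_update_decrease p mu; have [e' d'] := IHs p1.
rewrite -/p1 -/p' in e1 d1 e' d' *.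
have sqrt_le x : x <= energy (U p) - energy (U p') ->
    Num.sqrt (c * x) <= Num.sqrt (c * (energy (U p) - energy (U p'))).
  by move=> xle; rewrite ler_sqrt ?ler_wpM2l // mulr_ge0 // subr_ge0 (le_trans e').
split; first exact: le_trans e' e1.
apply: le_trans (enormB_le _ (U p1) _) _; rewrite -nat1r mulrDl mul1r addrC.
apply: lerD; first by apply: le_trans d1 (sqrt_le _ _); rewrite lerB.
by apply: le_trans d' _; rewrite ler_wpM2l // sqrt_le // lerB.
Qed.

End ALSEnergy.

Lemma mx_norm_entry_le (R : realType) m n (M : 'M[R]_(m, n)) i j : `|M i j| <= `|M|.
Proof.
change `|M| with (mx_norm M); rewrite mx_normrE.
exact: (le_bigmax _ (fun ij : 'I_m * 'I_n => `|M ij.1 ij.2|) (i, j)).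
Qed.

Lemma nat_upcrossing (R : realType) (f : nat -> R) (a : R) k1 k2 :
  (k1 <= k2)%N -> f k1 < a -> a <= f k2 -> exists2 j, (k1 <= j)%N & f j < a <= f j.+1.
Proof.
elim: k2 => [|k IHk]; first by rewrite leqn0 => /eqP-> /lt_le_trans/[apply]; rewrite ltxx.
rewrite leq_eqVlt => /orP[/eqP-> /lt_le_trans/[apply]|]; first by rewrite ltxx.
rewrite ltnS => k1k f1 fk1; have [fk|fk] := ltP (f k) a; first by exists k; rewrite ?fk.
exact: IHk.
Qed.

Section AccumulationPoints.
Variables (R : realType) (N : nat).
Implicit Types (v w : nat -> 'cV[R]_N) (x z : 'cV[R]_N).

Lemma bounded_accumulation_point w x (r : R) :
  (forall k, enorm (w k - x) <= r) -> exists z, accumulation_point w z.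
Proof.
move=> wr; pose ball_x := closed_ball_ (fun y : 'rV[R]_N => `|y|) x^T r.
have ball_compact : compact ball_x.
  apply: bounded_closed_compact; last exact: closed_closed_ball_.
  exists (`|x^T| + r); split; first by rewrite num_real.
  move=> M xrM y /= xy; rewrite -[y](subKr x^T).
  by apply: le_trans (ler_normB _ _) _; rewrite ltW // (le_lt_trans _ xrM) // lerD2l.
have w_ball : ((fun k => (w k)^T) @ \oo) ball_x.
  exists 0%N => // k _; rewrite /ball_x /closed_ball_ /=.
  change `|_| with (mx_norm (x^T - (w k)^T)); rewrite mx_normrE.
  apply: bigmax_le => [|[i j] _]; first by apply: le_trans (wr 0%N); exact: enorm_ge0.
  rewrite !mxE distrC; apply: le_trans (wr k).
  by have := entry_le_enorm (w k - x) j; rewrite !mxE (ord1 i).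
have [z [_ z_cluster]] := ball_compact _ _ w_ball.
exists z^T => e e_gt0 K.
have e'_gt0 : 0 < e / (N%:R + 1) by rewrite divr_gt0 // ltr_wpDl.
have tail_near : ((fun k => (w k)^T) @ \oo) [set (w k)^T | k in [set k | (K <= k)%N]].
  by exists K => // k Kk; exists k.
have [_ [[k Kk <-] zk]] := z_cluster _ _ tail_near (nbhsx_ballx z _ e'_gt0).
have {}zk : `|z - (w k)^T| < e / (N%:R + 1) by rewrite -ball_normE in zk.
exists k => //; apply: le_lt_trans (enorm_le_entries (t := e / (N%:R + 1)) _) _.
  move=> i; apply/ltW/(le_lt_trans _ zk).
  by have := mx_norm_entry_le (z - (w k)^T) 0 i; rewrite !mxE distrC.
have := ler0n R N; rewrite mulrA ltr_pdivrMr ?ltr_wpDl //; nra.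
Qed.

Lemma accumulation_point_subseq v (phi : nat -> nat) z :
  (forall k, (k <= phi k)%N) -> accumulation_point (v \o phi) z ->
  accumulation_point v z.
Proof.
move=> phi_ge acc e e_gt0 K; have [k Kk vk] := acc e e_gt0 K.
by exists (phi k) => //; exact: leq_trans Kk (phi_ge k).
Qed.

Lemma accumulation_point_enorm_le v x z (r : R) :
  accumulation_point v z -> (forall k, enorm (v k - x) <= r) -> enorm (z - x) <= r.
Proof.
move=> acc vr; apply/ler_addgt0Pr => e e_gt0; have [k _ vk] := acc e e_gt0 0%N.
apply: le_trans (enormB_le _ (v k) _) _.
by rewrite addrC lerD ?vr // enormB ltW.
Qed.

Lemma accumulation_point_enorm_ge v x z (r : R) :
  accumulation_point v z -> (forall k, r <= enorm (v k - x)) -> r <= enorm (z - x).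
Proof.
move=> acc rv; apply/ler_addgt0Pr => e e_gt0; have [k _ vk] := acc e e_gt0 0%N.
apply: le_trans (rv k) _; apply: le_trans (enormB_le _ z _) _.
by rewrite addrC lerD // ltW.
Qed.

End AccumulationPoints.

Lemma vanishing_steps_annulus (R : realType) N (v : nat -> 'cV[R]_N) x (e : R) :
  (forall e, 0 < e -> exists K, forall k, (K <= k)%N -> enorm (v k.+1 - v k) < e) ->
  accumulation_point v x -> 0 < e ->
  (forall K, exists2 k, (K <= k)%N & e <= enorm (v k - x)) ->
  forall K, exists k, [/\ (K <= k)%N, e / 2 <= enorm (v k - x) & enorm (v k - x) <= e].
Proof.
move=> steps acc e_gt0 far K; have e2_gt0 : 0 < e / 2 by rewrite divr_gt0.
have [K0 small_steps] := steps _ e2_gt0.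
have [k1 k1K near_k1] := acc _ e2_gt0 (maxn K K0).
have [k2 k12 far_k2] := far k1.
have [|j k1j /andP[near_j far_j]] :=
  nat_upcrossing (f := fun k => enorm (v k - x)) k12 near_k1.
  by apply: le_trans far_k2; lra.
have Kj : (maxn K K0 <= j)%N := leq_trans k1K k1j.
exists j.+1; split => //; first exact: leq_trans (leq_maxl K K0) (leqW Kj).
apply: le_trans (enormB_le _ (v j) _) _; rewrite [e in _ <= e]splitr.
apply: lerD; last exact: ltW.
by apply/ltW/small_steps/(leq_trans (leq_maxr K K0)).
Qed.

Lemma isolated_accumulation_point_limit (R : realType) N (v : nat -> 'cV[R]_N) x :
  (forall e, 0 < e -> exists K, forall k, (K <= k)%N -> enorm (v k.+1 - v k) < e) ->
  accumulation_point v x ->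
  (exists2 delta : R, 0 < delta &
     forall z, accumulation_point v z -> enorm (z - x) < delta -> z = x) ->
  converges_to v x.
Proof.
move=> steps acc [delta delta_gt0 isolated]; apply: contrapT => /existsNP[e0].
move=> /not_implyP[e0_gt0 /forallNP not_near].
set e := Num.min e0 (delta / 2).
have e_gt0 : 0 < e by rewrite lt_min e0_gt0 divr_gt0.
have e_lt_delta : e < delta.
  have : e <= delta / 2 by rewrite ge_min lexx orbT.
  lra.
have far K : exists2 k, (K <= k)%N & e <= enorm (v k - x).
  have /existsNP[k /not_implyP[Kk /negP]] := not_near K; rewrite -leNgt => e0_le.
  by exists k => //; apply: le_trans e0_le; rewrite ge_min lexx.
have [phi phiP] := choice (vanishing_steps_annulus steps acc e_gt0 far).
have phi_ge K : (K <= phi K)%N by case: (phiP K).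
have phi_far K : e / 2 <= enorm (v (phi K) - x) by case: (phiP K).
have phi_near K : enorm (v (phi K) - x) <= e by case: (phiP K).
have [z acc_z] := bounded_accumulation_point phi_near.
have z_near := accumulation_point_enorm_le acc_z phi_near.
have := accumulation_point_enorm_ge acc_z phi_far.
rewrite (isolated z (accumulation_point_subseq phi_ge acc_z)) ?subrr ?enorm0.
  by rewrite leNgt divr_gt0.
exact: le_lt_trans z_near e_lt_delta.
Qed.

Lemma nonincreasing_decrements_vanish (R : realType) (h : nat -> R) :
  (forall k, h k.+1 <= h k) -> (forall k, 0 <= h k) ->
  forall e, 0 < e -> exists K, forall k, (K <= k)%N -> h k - h k.+1 < e.
Proof.
move=> h_dec h_ge0.
have /cvg_ex[l h_l] : cvgn h.
  apply: nonincreasing_is_cvgn; first exact/nonincreasing_seqP.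
  by exists 0 => _ [k _ <-]; exact: h_ge0.
have : (fun k => h k - h k.+1) @ \oo --> l - l.
  by apply: cvgB => //; rewrite (cvg_shiftS h).
rewrite subrr => /cvgrPdist_lt decr e e_gt0.
have [K _ HK] := decr e e_gt0; exists K => k Kk.
by have := HK k Kk; rewrite /= sub0r normrN => /(le_lt_trans (ler_norm _)).
Qed.

Section ALSConvergence.
Variables (R : realType) (L N : nat) (n : 'I_L -> nat).
Variable U : params R n -> 'cV[R]_N.
Hypothesis mlU : multilinear U.
Variables (A : 'M[R]_N) (b : 'cV[R]_N) (p1 : params R n).
Hypothesis pdA : symmetric_pd A.

Let v k := U (als_seq U A b p1 k).

Lemma als_steps_vanish (e : R) :
  0 < e -> exists K, forall k, (K <= k)%N -> enorm (v k.+1 - v k) < e.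
Proof.
move=> e_gt0; have [c c_gt0 c_bound] := spd_enorm_bound pdA.
have sweep k : energy A b (v k.+1) <= energy A b (v k) /\
    enorm (v k.+1 - v k) <= L%:R * Num.sqrt (c * (energy A b (v k) - energy A b (v k.+1))).
  have := als_foldl_decrease mlU b pdA (ltW c_gt0) c_bound (enum 'I_L) (als_seq U A b p1 k).
  by rewrite size_enum_ord.
set t := e / (L%:R + 1).
have t_gt0 : 0 < t by rewrite divr_gt0 // ltr_wpDl.
have [K small_decr] := nonincreasing_decrements_vanish (fun k => (sweep k).1)
  (fun k => energy_ge0 b pdA _) (divr_gt0 (exprn_gt0 2 t_gt0) c_gt0).
exists K => k Kk; apply: le_lt_trans (sweep k).2 _.
have sqrt_lt : Num.sqrt (c * (energy A b (v k) - energy A b (v k.+1))) < t.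
  rewrite -(gtr0_norm t_gt0) -sqrtr_sqr ltr_sqrt ?exprn_gt0 // -ltr_pdivlMl //.
  by rewrite mulrC small_decr.
have := sqrtr_ge0 (c * (energy A b (v k) - energy A b (v k.+1))).
have : t * (L%:R + 1) = e by rewrite mulfVK // gt_eqF // ltr_wpDl.
have := ler0n R L; nra.
Qed.

End ALSConvergence.

Theorem mainTheorem2 (R : realType) (d : nat) (m : 'I_d -> nat) (N : nat)
  (L : nat) (n : 'I_L -> nat)
  (U : params R n -> 'cV[R]_N) (A : 'M[R]_N) (b : 'cV[R]_N) (p1 : params R n)
  (vbar : 'cV[R]_N) :
  (1 <= d)%N -> (forall nu, (0 < m nu)%N) -> N = (\prod_(nu < d) m nu)%N ->
  (d <= L)%N ->
  symmetric_pd A -> b != 0 -> multilinear U ->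
  (* the ALS parameter sequence is bounded (in the product Euclidean norm) *)
  (exists M : R, forall k : nat,
     \sum_(mu < L) enorm (als_seq U A b p1 k mu) ^+ 2 <= M) ->
  accumulation_point (fun k => U (als_seq U A b p1 k)) vbar ->
  (exists2 delta : R, 0 < delta &
     forall w : 'cV[R]_N, accumulation_point (fun k => U (als_seq U A b p1 k)) w ->
       enorm (w - vbar) < delta -> w = vbar) ->
  converges_to (fun k => U (als_seq U A b p1 k)) vbar.
Proof.
move=> _ _ _ _ pdA _ mlU _ acc isolated.
exact: isolated_accumulation_point_limit (als_steps_vanish mlU b p1 pdA) acc isolated.
Qed.
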